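(* Let $Z\subset\mathbb{S}_2$ be a finite nonempty set of points. Then the following are equivalent: (i) $Z=\{Q\}$ for a single point $Q\in(E_1\cup E_2)\setminus\widetilde{L_{12}}$; (ii) $\alpha(Z)=\alpha(2Z)=\alpha(3Z)=\alpha(4Z)=1$ and $\alpha(5Z)>1$.
   Context: Let $P_1,P_2\in\mathbb{P}^2(\mathbb{C})$ be two general (distinct) points and $f\colon\mathbb{S}_2\to\mathbb{P}^2$ the blow-up at them, with exceptional curves $E_i=f^{-1}(P_i)$; let $H$ be the pullback of the class of a line and $\mathbb{L}_2=3H-E_1-E_2=-K_{\mathbb{S}_2}$. $L_{12}$ is the line through $P_1,P_2$ and $\widetilde{L_{12}}$ its proper transform in $\mathbb{S}_2$. For a finite set $Z\subset\mathbb{S}_2$ with ideal sheaf $\mathcal{I}_Z$ and a positive integer $m$, $\alpha(mZ)=\min\{d\ge 0:\ H^0(\mathbb{S}_2,d\mathbb{L}_2\otimes\mathcal{I}_Z^{(m)})\neq 0\}$, i.e. the least $d$ such that some effective divisor $D\in|d\mathbb{L}_2|$ has multiplicity at least $m$ at every point of $Z$. *)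

From HB Require Import structures.
From mathcomp Require Import all_boot all_order all_algebra.
From mathcomp Require Import mpoly.
From mathcomp Require Import complex.
From mathcomp Require Import Rstruct.
From Stdlib Require Import ClassicalEpsilon.

Set Implicit Arguments.
Unset Strict Implicit.
Unset Printing Implicit Defensive.

Import GRing.Theory.
Local Open Scope ring_scope.

Definition CC : fieldType := complex Rdefinitions.R.

(* Homogeneous coordinates X0, X1, X2 on P^2.  Since any two distinct points
   of P^2 are projectively equivalent, we take P1 = [1:0:0], P2 = [0:1:0];
   then L12 = {X2 = 0}. *)
Definition poly3 := {mpoly CC[3]}.
Definition poly2 := {mpoly CC[2]}.

(* Points of S_2 = Bl_{P1,P2} P^2, given by representatives:
   - Pl x y z : the point (preimage of) [x:y:z] in P^2 \ {P1,P2};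
   - Ex1 a b  : the point of E1 corresponding to the tangent direction at P1
                with (affine coords X1/X0, X2/X0)-direction [a:b];
   - Ex2 a b  : the point of E2 corresponding to the tangent direction at P2
                with (affine coords X0/X1, X2/X1)-direction [a:b]. *)
Inductive S2pt :=
| Pl  of CC & CC & CC
| Ex1 of CC & CC
| Ex2 of CC & CC.

(* Validity of a representative. [x:y:z] <> P1 iff (y,z) <> 0,
   [x:y:z] <> P2 iff (x,z) <> 0. *)
Definition valid_pt (Q : S2pt) : Prop :=
  match Q with
  | Pl x y z => (y, z) <> (0, 0) /\ (x, z) <> (0, 0)
  | Ex1 a b => (a, b) <> (0, 0)
  | Ex2 a b => (a, b) <> (0, 0)
  end.

Definition same_pt (Q Q' : S2pt) : Prop :=
  match Q, Q' with
  | Pl x y z, Pl x' y' z' =>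
      exists c : CC, c != 0 /\ x' = c * x /\ y' = c * y /\ z' = c * z
  | Ex1 a b, Ex1 a' b' => exists c : CC, c != 0 /\ a' = c * a /\ b' = c * b
  | Ex2 a b, Ex2 a' b' => exists c : CC, c != 0 /\ a' = c * a /\ b' = c * b
  | _, _ => False
  end.

Definition on_exc (Q : S2pt) : Prop :=
  match Q with Pl _ _ _ => False | _ => True end.

(* Q lies on the proper transform of L12 = {X2 = 0}.  The proper transform
   meets E1 (resp. E2) in the direction of L12, i.e. b = 0. *)
Definition on_L12t (Q : S2pt) : Prop :=
  match Q with
  | Pl _ _ z => z = 0
  | Ex1 _ b => b = 0
  | Ex2 _ b => b = 0
  end.

Definition homog3 (e : nat) (F : poly3) : Prop :=
  forall m, m \in msupp F -> mdeg m = e.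

(* Multiplicity of the plane curve {F = 0} at the point [p0:p1:p2] is >= r:
   the Taylor expansion F(p + v) has no monomial of degree < r in v. *)
Definition mult_ge_P2 (F : poly3) (p0 p1 p2 : CC) (r : nat) : Prop :=
  let G : poly3 :=
    F \mPo [tuple 'X_0 + p0%:MP; 'X_1 + p1%:MP; 'X_2 + p2%:MP] in
  forall m, m \in msupp G -> (r <= mdeg m)%N.

(* A transverse vector (c,e) to a nonzero (a,b). *)
Definition transv (a b : CC) : CC * CC := if a == 0 then (1, 0) else (0, 1).

(* Let D = f^*C - d E1 - d E2 in |d L_2| where C = {F = 0}, F homogeneous of
   degree 3d with mult >= d at P1, P2.  Near the point Q of E1 with direction
   [a:b], the blow-up is parametrised by (u,s) |-> [1 : u(a+sc) : u(b+se)]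
   (E1 = {u = 0}, Q = (0,0)), and D is locally the divisor of
   F(1, u(a+sc), u(b+se)) / u^d.  So mult_Q D >= r iff every monomial u^i s^k
   of  G(u,s) = F(1, u(a+sc), u(b+se))  satisfies  d <= i  and  r <= i - d + k.
   Similarly at E2 with (u,s) |-> [u(a+sc) : 1 : u(b+se)]. *)
Definition mult_ge_E1 (d : nat) (F : poly3) (a b : CC) (r : nat) : Prop :=
  let ce := transv a b in
  let u : poly2 := 'X_0 in let s : poly2 := 'X_1 in
  let G : poly2 :=
    F \mPo [tuple 1; u * (a%:MP + s * ce.1%:MP); u * (b%:MP + s * ce.2%:MP)] in
  forall m, m \in msupp G -> (d <= m ord0)%N /\ (r + d <= m ord0 + m (@Ordinal 2 1 isT))%N.

Definition mult_ge_E2 (d : nat) (F : poly3) (a b : CC) (r : nat) : Prop :=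
  let ce := transv a b in
  let u : poly2 := 'X_0 in let s : poly2 := 'X_1 in
  let G : poly2 :=
    F \mPo [tuple u * (a%:MP + s * ce.1%:MP); 1; u * (b%:MP + s * ce.2%:MP)] in
  forall m, m \in msupp G -> (d <= m ord0)%N /\ (r + d <= m ord0 + m (@Ordinal 2 1 isT))%N.

Definition mult_ge (d : nat) (F : poly3) (Q : S2pt) (r : nat) : Prop :=
  match Q with
  | Pl x y z => mult_ge_P2 F x y z r
  | Ex1 a b => mult_ge_E1 d F a b r
  | Ex2 a b => mult_ge_E2 d F a b r
  end.

(* Nonzero sections of d L_2 = 3dH - dE1 - dE2: nonzero homogeneous F of
   degree 3d with multiplicity >= d at P1 = [1:0:0] and P2 = [0:1:0]. *)
Definition section_dL2 (d : nat) (F : poly3) : Prop :=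
  F != 0 /\ homog3 (3 * d) F /\ mult_ge_P2 F 1 0 0 d /\ mult_ge_P2 F 0 1 0 d.

(* H^0(S_2, d L_2 (x) I_Z^(m)) <> 0 : some D in |d L_2| has multiplicity
   >= m at every point of Z (Z given as a list of representatives). *)
Definition has_div (Z : seq S2pt) (m d : nat) : Prop :=
  exists F, section_dL2 d F /\ forall Q, List.In Q Z -> mult_ge d F Q m.

Definition has_divb (Z : seq S2pt) (m d : nat) : bool :=
  if excluded_middle_informative (has_div Z m d) then true else false.

(* alpha(mZ) = min { d | H^0(d L_2 (x) I_Z^(m)) <> 0 }.
   (Such d always exists; the default value 0 is never used.) *)
Definition alpha (Z : seq S2pt) (m : nat) : nat :=
  match excluded_middle_informative (exists d, has_divb Z m d) with
  | left H => ex_minn H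
  | right _ => 0%N
  end.

(* Take P1 = [1:0:0], P2 = [0:1:0], so that L12 = {X2 = 0}; members of |L_2| are
   cubics through P1 and P2.  In the blow-up chart at a point Q of E1 of
   direction [a:b], multiplicity 4 at Q forces F = (b X1 - a X2)^2 (p X1 + q X2),
   and multiplicity 5 forces moreover a p + b q = 0.  If Q is off L12 (b <> 0),
   vanishing at P2 gives p = 0, hence F = q (b X1 - a X2)^2 X2 and multiplicity 5
   is impossible, while this cubic has multiplicity 4 and its square gives a
   member of |2 L_2| with multiplicity 8.
   Conversely, take a cubic with multiplicity 4 along Z.  No point of Z lies off
   E1 u E2 (a plane cubic has multiplicity at most 3), and not all of Z lies on
   L12~, otherwise X2^3 would have multiplicity 5 along Z.  Using the symmetry
   exchanging P1 and P2, some point of Z lies on E1 \ L12~, so the cubic is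
   q (b X1 - a X2)^2 X2, whose restriction to X0 = 0 is a genuine quadratic;
   multiplicity 4 at an exceptional point of another direction would make that
   restriction affine. *)

From mathcomp Require Import all_boot all_order all_algebra.
From mathcomp Require Import mpoly complex Rstruct.
From mathcomp Require Import ring zify.
From Stdlib Require Import Classical ClassicalEpsilon.
Set Implicit Arguments.
Unset Strict Implicit.
Unset Printing Implicit Defensive.
Import GRing.Theory Num.Theory.
Local Open Scope ring_scope.

Section WeightBounds.
Variables (R : nzRingType) (n : nat) (w : 'X_{1..n} -> nat).
Hypothesis wD : forall m1 m2, w (m1 + m2)%MM = (w m1 + w m2)%N.
Implicit Types (p q : {mpoly R[n]}) (lo hi : nat).

Definition wt_within lo hi p : bool := all (fun m => lo <= w m <= hi)%N (msupp p).

Lemma wt_withinP lo hi p :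
  reflect {in msupp p, forall m, lo <= w m <= hi}%N (wt_within lo hi p).
Proof. exact: allP. Qed.

Lemma wt_within0 lo hi : wt_within lo hi 0.
Proof. by rewrite /wt_within msupp0. Qed.

Lemma wt_withinW lo hi lo' hi' p :
  (lo' <= lo)%N -> (hi <= hi')%N -> wt_within lo hi p -> wt_within lo' hi' p.
Proof.
move=> le_lo le_hi /wt_withinP hp; apply/wt_withinP => m /hp /andP[h1 h2].
by apply/andP; split; lia.
Qed.

Lemma wt_withinD lo hi p q :
  wt_within lo hi p -> wt_within lo hi q -> wt_within lo hi (p + q).
Proof.
move=> /wt_withinP hp /wt_withinP hq; apply/wt_withinP => m /msuppD_le.
by rewrite mem_cat => /orP[/hp|/hq].
Qed.

Lemma wt_withinN lo hi p : wt_within lo hi p -> wt_within lo hi (- p).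
Proof.
by move=> /wt_withinP hp; apply/wt_withinP => m; rewrite (perm_mem (msuppN p)) => /hp.
Qed.

Lemma wt_withinB lo hi p q :
  wt_within lo hi p -> wt_within lo hi q -> wt_within lo hi (p - q).
Proof. by move=> hp hq; apply: wt_withinD => //; apply: wt_withinN. Qed.

Lemma wt_withinZ lo hi c p : wt_within lo hi p -> wt_within lo hi (c *: p).
Proof. by move=> /wt_withinP hp; apply/wt_withinP => m /msuppZ_le /hp. Qed.

Lemma wt_within_sum (I : Type) (r : seq I) (P : pred I) (F : I -> {mpoly R[n]}) lo hi :
  (forall i, P i -> wt_within lo hi (F i)) -> wt_within lo hi (\sum_(i <- r | P i) F i).
Proof.
by move=> hF; apply: (big_ind (wt_within lo hi)) => //; [exact: wt_within0 | exact: wt_withinD].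
Qed.

Lemma wt_withinM lo1 hi1 lo2 hi2 p q :
  wt_within lo1 hi1 p -> wt_within lo2 hi2 q ->
  wt_within (lo1 + lo2) (hi1 + hi2) (p * q).
Proof.
move=> /wt_withinP hp /wt_withinP hq; apply/wt_withinP => m.
move=> /msuppM_le /allpairsP[[m1 m2] /= [/hp/andP[? ?] /hq/andP[? ?] ->]].
by rewrite wD; apply/andP; split; lia.
Qed.

Lemma wt_withinX m : wt_within (w m) (w m) 'X_[m].
Proof. by rewrite /wt_within msuppX /= leqnn. Qed.

Lemma wt_withinC c : wt_within 0 0 c%:MP.
Proof.
have w0 : w 0%MM = 0%N by have := wD 0%MM 0%MM; rewrite addm0; lia.
by rewrite /wt_within msuppC; case: (c == 0) => //=; rewrite w0.
Qed.

Lemma wt_withinXn lo hi p k :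
  wt_within lo hi p -> wt_within (lo * k) (hi * k) (p ^+ k).
Proof.
move=> hp; elim: k => [|k ih]; first by rewrite !muln0 expr0 -mpolyC1; apply: wt_withinC.
by rewrite exprS !mulnS; apply: wt_withinM.
Qed.

End WeightBounds.

Lemma wt_within_comp (R : nzRingType) n k (w : 'X_{1..k} -> nat)
    (p : {mpoly R[n]}) (lq : n.-tuple {mpoly R[k]}) lo hi e1 e2 :
  (forall m1 m2, w (m1 + m2)%MM = (w m1 + w m2)%N) ->
  (forall i, wt_within w lo hi (tnth lq i)) -> wt_within mdeg e1 e2 p ->
  wt_within w (lo * e1) (hi * e2) (p \mPo lq).
Proof.
move=> wD hq /wt_withinP hp; rewrite comp_mpolyE big_seq.
apply: wt_within_sum => m /hp/andP[le1 le2].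
apply/wt_withinZ/(wt_withinW (leq_mul (leqnn lo) le1) (leq_mul (leqnn hi) le2)).
rewrite mdegE !big_distrr /=.
apply: (big_ind3 (fun a b c => wt_within w a b c)) => [|? ? ? ? ? ? ? ?|i _].
- by rewrite -mpolyC1; apply: wt_withinC.
- exact: wt_withinM.
- exact: wt_withinXn.
Qed.

Lemma comp_mpoly_comp (R : comNzRingType) n k l (p : {mpoly R[n]})
    (t1 : n.-tuple {mpoly R[k]}) (t2 : k.-tuple {mpoly R[l]}) (t : n.-tuple {mpoly R[l]}) :
  (forall i, tnth t1 i \mPo t2 = tnth t i) -> (p \mPo t1) \mPo t2 = p \mPo t.
Proof.
move=> h; rewrite (comp_mpolyE p t1) (comp_mpolyE p) raddf_sum /=; apply: eq_bigr => m _.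
rewrite comp_mpolyZ rmorph_prod /=; congr (_ *: _); apply: eq_bigr => i _.
by rewrite rmorphXn /= h.
Qed.

Lemma comp_mpoly_compK (R : comNzRingType) n k (p : {mpoly R[n]})
    (t1 : n.-tuple {mpoly R[k]}) (t2 : k.-tuple {mpoly R[n]}) :
  (forall i, tnth t1 i \mPo t2 = 'X_i) -> (p \mPo t1) \mPo t2 = p.
Proof.
by move=> h; rewrite -[RHS]comp_mpoly_id; apply: comp_mpoly_comp => i; rewrite h tnth_mktuple.
Qed.

Lemma comp_mpolyX_tnth (R : nzRingType) n k (i : 'I_n) (lq : n.-tuple {mpoly R[k]}) :
  'X_i \mPo lq = tnth lq i.
Proof. by rewrite comp_mpolyXU (tnth_nth 0). Qed.

Section MonomialSubstitution.
Variables (R : nzRingType) (n k : nat) (mu : 'I_n -> 'X_{1..k}).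

Definition mnm_subst (m : 'X_{1..n}) : 'X_{1..k} := (\sum_(i < n) mu i *+ m i)%MM.

Lemma comp_mpoly_monomialsE (p : {mpoly R[n]}) :
  p \mPo [tuple 'X_[mu i] | i < n] = \sum_(m <- msupp p) p@_m *: 'X_[mnm_subst m].
Proof.
rewrite comp_mpolyE; apply: eq_bigr => m _; congr (_ *: _).
rewrite /mnm_subst (big_morph _ (@mpolyXD _ _) (@mpolyX0 _ _)); apply: eq_bigr => i _.
by rewrite tnth_mktuple mpolyXn.
Qed.

Lemma mcoeff_comp_monomials (p : {mpoly R[n]}) m0 :
  m0 \in msupp p -> {in msupp p, forall m, mnm_subst m = mnm_subst m0 -> m = m0} ->
  (p \mPo [tuple 'X_[mu i] | i < n])@_(mnm_subst m0) = p@_m0.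
Proof.
move=> m0p inj; rewrite comp_mpoly_monomialsE raddf_sum /=.
rewrite (bigD1_seq m0) ?msupp_uniq //= mcoeffZ mcoeffX eqxx mulr1.
rewrite big_seq_cond big1 ?addr0 // => m /andP[mp ne].
rewrite mcoeffZ mcoeffX; case: eqP => [/(inj _ mp) e|]; last by rewrite mulr0.
by rewrite e eqxx in ne.
Qed.

End MonomialSubstitution.

Lemma mpoly_supp2E (R : nzRingType) n (p : {mpoly R[n]}) m1 m2 :
  m1 != m2 -> {subset msupp p <= [:: m1; m2]} ->
  p = p@_m1 *: 'X_[m1] + p@_m2 *: 'X_[m2].
Proof.
move=> ne sub; apply/mpolyP => m; rewrite mcoeffD !mcoeffZ !mcoeffX.
have [<-|n1] := eqVneq m1 m; first by rewrite eq_sym (negbTE ne) mulr1 mulr0 addr0.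
have [<-|n2] := eqVneq m2 m; first by rewrite mulr1 mulr0 add0r.
rewrite !mulr0 addr0 memN_msupp_eq0 //; apply/negP => /sub.
by rewrite !inE => /orP[] /eqP e; [rewrite e eqxx in n1 | rewrite e eqxx in n2].
Qed.

Lemma mnm3P (m m' : 'X_{1..3}) :
  m 0%R = m' 0%R -> m 1%R = m' 1%R -> m 2%R = m' 2%R -> m = m'.
Proof.
move=> h0 h1 h2; apply/mnmP => -[[|[|[|//]]] Hi].
- by rewrite (_ : Ordinal Hi = 0%R) //; apply: val_inj.
- by rewrite (_ : Ordinal Hi = 1%R) //; apply: val_inj.
- by rewrite (_ : Ordinal Hi = 2%R) //; apply: val_inj.
Qed.

Lemma mdeg3 (m : 'X_{1..3}) : mdeg m = (m 0%R + m 1%R + m 2%R)%N.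
Proof.
by rewrite mdegE !big_ord_recr big_ord0 /= add0n; congr (m _ + m _ + m _)%N; apply: val_inj.
Qed.

Definition coords (x y z : CC) (i : 'I_3) : CC := nth 0 [:: x; y; z] i.

Definition shift3 (x y z : CC) : 3.-tuple poly3 :=
  [tuple 'X_0 + x%:MP; 'X_1 + y%:MP; 'X_2 + z%:MP].

Lemma mult_ge_P2E F x y z r :
  mult_ge_P2 F x y z r <-> {in msupp (F \mPo shift3 x y z), forall m, (r <= mdeg m)%N}.
Proof. by []. Qed.

Lemma homog3_within e F : homog3 e F <-> wt_within mdeg e e F.
Proof.
split=> [h|/wt_withinP h m /h]; first by apply/wt_withinP => m /h ->; rewrite leqnn.
by rewrite -eqn_leq => /eqP.
Qed.

Lemma wt_within_X (i : 'I_3) : wt_within mdeg 1 1 ('X_i : poly3).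
Proof. by have := @wt_withinX CC 3 mdeg U_(i)%MM; rewrite mdeg1. Qed.

Lemma wt_within_linear (i j : 'I_3) (c c' : CC) :
  wt_within mdeg 1 1 (c%:MP * 'X_i + c'%:MP * 'X_j : poly3).
Proof.
by apply: wt_withinD; apply: (wt_withinM mdegD (wt_withinC mdegD _) (wt_within_X _)).
Qed.

Lemma wt_within_shift3 x y z i : wt_within mdeg 0 1 (tnth (shift3 x y z) i).
Proof.
rewrite (tnth_nth 0); case: i => [[|[|[|//]]] ?] /=;
  by apply: wt_withinD;
    [apply: wt_withinW (wt_within_X _) | apply: wt_withinW (wt_withinC mdegD _)].
Qed.

Lemma wt_within_comp_shift3 lo hi F x y z :
  wt_within mdeg lo hi F -> wt_within mdeg 0 hi (F \mPo shift3 x y z).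
Proof.
by move=> hF; have := wt_within_comp mdegD (wt_within_shift3 x y z) hF; rewrite mul0n mul1n.
Qed.

Lemma mult_ge_P2_eval F x y z : mult_ge_P2 F x y z 1 -> F.@[coords x y z] = 0.
Proof.
move/mult_ge_P2E => hF.
have -> : F.@[coords x y z] = (F \mPo shift3 x y z).@[fun _ => 0].
  rewrite comp_mpoly_meval; apply: meval_eq => i; rewrite (tnth_nth 0).
  by case: i => [[|[|[|//]]] ?]; rewrite /= mevalD mevalXU mevalC add0r.
rewrite mevalE big_seq big1 // => m /hF; rewrite prodrXr expr0n -mdegE.
by rewrite eqn0Ngt => ->; rewrite mulr0.
Qed.

Lemma mult_ge_P2_homog e F x y z : homog3 e F -> mult_ge_P2 F x y z e.+1 -> F = 0.
Proof.
move=> /homog3_within hF /mult_ge_P2E hm.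
have /wt_withinP hG := wt_within_comp_shift3 x y z hF.
have G0 : F \mPo shift3 x y z = 0.
  apply: msuppnil0; case E: (msupp _) => [//|m s].
  have mG : m \in msupp (F \mPo shift3 x y z) by rewrite E inE eqxx.
  by have := hm _ mG; have /andP[_] := hG _ mG; lia.
have <- : (F \mPo shift3 x y z) \mPo shift3 (- x) (- y) (- z) = F.
  apply: (@comp_mpoly_compK CC) => i; rewrite (tnth_nth 0).
  case: i => [[|[|[|//]]] Hi]; rewrite /= comp_mpolyD comp_mpolyX_tnth comp_mpolyC (tnth_nth 0) /=;
    by rewrite rmorphN /= subrK; congr 'X_ _; apply: val_inj.
by rewrite G0 comp_mpoly0.
Qed.

Lemma X2_neq0 : ('X_2 : poly3) != 0.
Proof. by apply/eqP => h; have := msuppX CC U_(2%R : 'I_3)%MM; rewrite h msupp0. Qed.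

(* P1 and P2 lie on L12 = {X2 = 0}, where X2^k alone vanishes to order k >= d. *)
Lemma section_dL2_mulX2 d k (H : poly3) :
  H != 0 -> homog3 (3 * d - k) H -> (d <= k <= 3 * d)%N ->
  section_dL2 d (H * 'X_2 ^+ k).
Proof.
move=> nzH /homog3_within hH /andP[dk k3d].
have hX : wt_within mdeg k k ('X_2 ^+ k : poly3).
  by have := wt_withinXn mdegD k (wt_within_X 2); rewrite mul1n.
have mult_P x y : mult_ge_P2 (H * 'X_2 ^+ k) x y 0 d.
  apply/mult_ge_P2E; rewrite rmorphM rmorphXn /= comp_mpolyX_tnth (tnth_nth 0) /=.
  rewrite mpolyC0 addr0 => m.
  have /wt_withinP := wt_withinM mdegD (wt_within_comp_shift3 x y 0 hH) hX.
  by move=> /[apply] /andP[? _]; lia.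
split; first by rewrite mulf_neq0 // expf_neq0 // X2_neq0.
split; last by split; apply: mult_P.
apply/homog3_within; apply: wt_withinW (wt_withinM mdegD hH hX); lia.
Qed.

Definition chart1 (a b : CC) : 3.-tuple poly2 :=
  [tuple 1; 'X_0 * (a%:MP + 'X_1 * (transv a b).1%:MP);
            'X_0 * (b%:MP + 'X_1 * (transv a b).2%:MP)].

Definition chart2 (a b : CC) : 3.-tuple poly2 :=
  [tuple 'X_0 * (a%:MP + 'X_1 * (transv a b).1%:MP); 1;
         'X_0 * (b%:MP + 'X_1 * (transv a b).2%:MP)].

Definition exc_order (m : 'X_{1..2}) : nat := m ord0.

Lemma exc_orderD m1 m2 : exc_order (m1 + m2)%MM = (exc_order m1 + exc_order m2)%N.
Proof. exact: mnmDE. Qed.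

Lemma mdeg2 (m : 'X_{1..2}) : mdeg m = (m ord0 + m (@Ordinal 2 1 isT))%N.
Proof. by rewrite mdegE !big_ord_recr big_ord0 /= add0n; congr (m _ + m _)%N; apply: val_inj. Qed.

Lemma mult_ge_E1E d F a b r : mult_ge_E1 d F a b r <->
  {in msupp (F \mPo chart1 a b), forall m, d <= exc_order m /\ r + d <= mdeg m}%N.
Proof. by rewrite /mult_ge_E1 /=; split=> h m /h; rewrite mdeg2. Qed.

Lemma mult_ge_E2E d F a b r : mult_ge_E2 d F a b r <->
  {in msupp (F \mPo chart2 a b), forall m, d <= exc_order m /\ r + d <= mdeg m}%N.
Proof. by rewrite /mult_ge_E2 /=; split=> h m /h; rewrite mdeg2. Qed.

Lemma mult_ge_E1_within d F a b r hi1 hi2 :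
  wt_within exc_order d hi1 (F \mPo chart1 a b) ->
  wt_within mdeg (r + d) hi2 (F \mPo chart1 a b) -> mult_ge_E1 d F a b r.
Proof.
move=> /wt_withinP h1 /wt_withinP h2; apply/mult_ge_E1E => m hm.
by have /andP[? _] := h1 m hm; have /andP[? _] := h2 m hm.
Qed.

(* The chart of E1 at the direction [a:b] is the linear change of coordinates
   [lin1 a b], sending that direction to the X1-axis, followed by the monomial
   substitution (X0, X1, X2) |-> (1, u, u s). *)
Definition lin1 (a b : CC) : 3.-tuple poly3 :=
  [tuple 'X_0; a%:MP * 'X_1 + (transv a b).1%:MP * 'X_2;
               b%:MP * 'X_1 + (transv a b).2%:MP * 'X_2].

Definition blowup_mnm (i : 'I_3) : 'X_{1..2} :=
  match val i with
  | 0 => 0%MM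
  | 1 => U_(0%R : 'I_2)%MM
  | _ => (U_(0%R : 'I_2) + U_(1%R : 'I_2))%MM
  end.

Lemma chart1E F a b :
  F \mPo chart1 a b = (F \mPo lin1 a b) \mPo [tuple 'X_[blowup_mnm i] | i < 3].
Proof.
apply/esym/(@comp_mpoly_comp CC) => i; rewrite !(tnth_nth 0).
case: i => [[|[|[|//]]] ?] /=; first by rewrite comp_mpolyX_tnth tnth_mktuple /= mpolyX0.
- rewrite comp_mpolyD !rmorphM /= !comp_mpolyC !comp_mpolyX_tnth !tnth_mktuple /= mpolyXD.
  ring.
- rewrite comp_mpolyD !rmorphM /= !comp_mpolyC !comp_mpolyX_tnth !tnth_mktuple /= mpolyXD.
  ring.
Qed.

Lemma mnm_subst_blowup (m : 'X_{1..3}) :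
  mnm_subst blowup_mnm m ord0 = (m 1%R + m 2%R)%N /\
  mnm_subst blowup_mnm m (@Ordinal 2 1 isT) = m 2%R.
Proof.
rewrite /mnm_subst !big_ord_recr big_ord0 /= !mnmDE !mulmnE !mnmDE !mnm1E !mnm0E /=.
have -> : widen_ord (leqnSn 2) ord_max = 1%R :> 'I_3 by apply: val_inj.
have -> : ord_max = 2%R :> 'I_3 by apply: val_inj.
split; lia.
Qed.

Lemma wt_within_lin1 a b i : wt_within mdeg 1 1 (tnth (lin1 a b) i).
Proof.
rewrite (tnth_nth 0); case: i => [[|[|[|//]]] ?] /=;
  [exact: wt_within_X | exact: wt_within_linear | exact: wt_within_linear].
Qed.

Lemma msupp_lin1_cubic F a b r : homog3 3 F -> mult_ge_E1 1 F a b r ->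
  {in msupp (F \mPo lin1 a b), forall m, mdeg m = 3 /\ r + 1 <= m 1%R + 2 * m 2%R}%N.
Proof.
move=> /homog3_within hF /mult_ge_E1E hm.
have /wt_withinP hG : wt_within mdeg 3 3 (F \mPo lin1 a b).
  by have := wt_within_comp mdegD (wt_within_lin1 a b) hF; rewrite mul1n.
have deg3 m : m \in msupp (F \mPo lin1 a b) -> mdeg m = 3%N.
  by move/hG; rewrite -eqn_leq => /eqP.
move=> m mG; split; first exact: deg3.
have : mnm_subst blowup_mnm m \in msupp (F \mPo chart1 a b).
  rewrite chart1E mcoeff_msupp mcoeff_comp_monomials // -?mcoeff_msupp //.
  move=> m' mG' e; have := deg3 _ mG; have := deg3 _ mG'; rewrite !mdeg3.
  have [e1 e2] := mnm_subst_blowup m; have [e1' e2'] := mnm_subst_blowup m'.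
  rewrite e in e1' e2'; move=> d1 d2; apply: mnm3P; lia.
move=> /hm[_]; rewrite mdeg2; have [-> ->] := mnm_subst_blowup m; lia.
Qed.

Definition transv_det (a b : CC) := a * (transv a b).2 - b * (transv a b).1.

Lemma transv_det_neq0 a b : (a, b) <> (0, 0) -> transv_det a b != 0.
Proof.
rewrite /transv_det /transv; have [->|a0] := eqVneq a 0 => /= ab.
  by rewrite mul0r mulr1 sub0r oppr_eq0; apply/eqP => b0; apply: ab; rewrite b0.
by rewrite mulr1 mulr0 subr0.
Qed.

Definition lin1_inv (a b : CC) : 3.-tuple poly3 :=
  let d := transv_det a b in
  [tuple 'X_0; ((transv a b).2 / d)%:MP * 'X_1 - ((transv a b).1 / d)%:MP * 'X_2;
               (- b / d)%:MP * 'X_1 + (a / d)%:MP * 'X_2].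

Lemma lin1K a b F : (a, b) <> (0, 0) -> (F \mPo lin1 a b) \mPo lin1_inv a b = F.
Proof.
move=> /transv_det_neq0; rewrite /lin1_inv /lin1 /transv_det.
case: (transv a b) => c e /= d0; set d := a * e - b * c in d0 *.
apply: (@comp_mpoly_compK CC) => i; rewrite (tnth_nth 0).
case: i => [[|[|[|//]]] Hi] /=.
- by rewrite comp_mpolyX_tnth (tnth_nth 0) /=; congr 'X_ _; apply: val_inj.
- rewrite comp_mpolyD !rmorphM /= !comp_mpolyC !comp_mpolyX_tnth !(tnth_nth 0) /=.
  transitivity ((a * (e / d) + c * (- b / d))%:MP * 'X_1 +
                (- a * (c / d) + c * (a / d))%:MP * ('X_2 : poly3)); first ring.
  have -> : a * (e / d) + c * (- b / d) = 1 by rewrite /d; field.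
  have -> : - a * (c / d) + c * (a / d) = 0 by field.
  by rewrite mul1r mul0r addr0; congr 'X_ _; apply: val_inj.
- rewrite comp_mpolyD !rmorphM /= !comp_mpolyC !comp_mpolyX_tnth !(tnth_nth 0) /=.
  transitivity ((b * (e / d) + e * (- b / d))%:MP * 'X_1 +
                (- b * (c / d) + e * (a / d))%:MP * ('X_2 : poly3)); first ring.
  have -> : b * (e / d) + e * (- b / d) = 0 by field.
  have -> : - b * (c / d) + e * (a / d) = 1 by rewrite /d; field.
  by rewrite mul1r mul0r add0r; congr 'X_ _; apply: val_inj.
Qed.

Lemma meval_lin1_inv a b x y z : let d := transv_det a b in
  (fun i => (tnth (lin1_inv a b) i).@[coords x y z]) =1
  coords x ((transv a b).2 / d * y - (transv a b).1 / d * z) (- b / d * y + a / d * z).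
Proof.
move=> d i; rewrite (tnth_nth 0).
by case: i => [[|[|[|//]]] ?]; rewrite /= ?mevalD ?mevalN ?mevalM ?mevalC ?mevalXU.
Qed.

(* In the coordinates [lin1 a b] the chart condition reads [r + 1 <= m1 + 2 m2]:
   among cubic monomials only X1 X2^2 and X2^3 pass it for r = 4, only X2^3 for
   r >= 5. *)
Lemma lin1_cubic F a b r : homog3 3 F -> mult_ge_E1 1 F a b r -> (4 <= r)%N ->
  exists c1 c2, F \mPo lin1 a b = c1 *: ('X_1 * 'X_2 ^+ 2) + c2 *: 'X_2 ^+ 3 /\
                ((5 <= r)%N -> c1 = 0).
Proof.
move=> hF hm r4; set G := F \mPo lin1 a b.
pose m12 : 'X_{1..3} := (U_(1%R : 'I_3) + U_(2%R : 'I_3) *+ 2)%MM.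
pose m03 : 'X_{1..3} := (U_(2%R : 'I_3) *+ 3)%MM.
have [e0 e1 e2] : [/\ m12 0%R = 0, m12 1%R = 1 & m12 2%R = 2]%N.
  by rewrite /m12 !mnmDE ?mulmnE !mnm1E.
have [f0 f1 f2] : [/\ m03 0%R = 0, m03 1%R = 0 & m03 2%R = 3]%N.
  by rewrite /m03 ?mnmDE ?mulmnE !mnm1E.
have hG := msupp_lin1_cubic hF hm.
exists G@_m12, G@_m03; split; last first.
  by move=> r5; apply: memN_msupp_eq0; apply/negP => /hG[_]; rewrite e1 e2; lia.
have -> : 'X_1 * 'X_2 ^+ 2 = 'X_[m12] :> poly3 by rewrite mpolyXD mpolyXn.
have -> : 'X_2 ^+ 3 = 'X_[m03] :> poly3 by rewrite mpolyXn.
apply: mpoly_supp2E => [|m /hG[]].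
  by apply/eqP => e; move: e1; rewrite e f1.
rewrite mdeg3 !inE => d3 h.
have [[? [? ?]]|[? [? ?]]] : (m 0%R = 0 /\ m 1%R = 1 /\ m 2%R = 2 \/
                              m 0%R = 0 /\ m 1%R = 0 /\ m 2%R = 3)%N by lia.
- by apply/orP; left; apply/eqP; apply: mnm3P; lia.
- by apply/orP; right; apply/eqP; apply: mnm3P; lia.
Qed.

Lemma cubic_mult_ge_E1 F a b r :
  homog3 3 F -> (a, b) <> (0, 0) -> mult_ge_E1 1 F a b r -> (4 <= r)%N ->
  exists p q, [/\ forall x y z, F.@[coords x y z] = (b * y - a * z) ^+ 2 * (p * y + q * z),
                  (p, q) = (0, 0) -> F = 0
                & (5 <= r)%N -> a * p + b * q = 0].
Proof.
move=> hF ab hm r4; have [c1 [c2 [eG c1_0]]] := lin1_cubic hF hm r4.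
have eF := lin1K F ab; rewrite eG in eF.
move: eF (transv_det_neq0 ab) (meval_lin1_inv a b); rewrite /transv_det.
case: (transv a b) => c e /=; set d := a * e - b * c => eF d0 ev.
exists ((c1 * e - c2 * b) / d ^+ 3), ((c2 * a - c1 * c) / d ^+ 3).
have hc1 : c1 = d ^+ 2 * (a * ((c1 * e - c2 * b) / d ^+ 3) + b * ((c2 * a - c1 * c) / d ^+ 3)).
  by rewrite /d; field; rewrite -/d.
have hc2 : c2 = d ^+ 2 * (c * ((c1 * e - c2 * b) / d ^+ 3) + e * ((c2 * a - c1 * c) / d ^+ 3)).
  by rewrite /d; field; rewrite -/d.
split.
- move=> x y z; rewrite -eF comp_mpoly_meval (meval_eq _ (ev x y z)).
  by rewrite mevalD !mevalZ mevalM !rmorphXn /= !mevalXU /coords /=; field.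
- case=> hp hq.
  have c10 : c1 = 0 by rewrite hc1 hp hq !mulr0 addr0 mulr0.
  have c20 : c2 = 0 by rewrite hc2 hp hq !mulr0 addr0 mulr0.
  by rewrite -eF c10 c20 !scale0r addr0 comp_mpoly0.
- move=> /c1_0 c10; move: hc1; rewrite c10 => /esym/eqP.
  by rewrite mulf_eq0 expf_eq0 (negbTE d0) => /eqP.
Qed.

Definition swap01 : 3.-tuple poly3 := [tuple 'X_1; 'X_0; 'X_2].

Definition swap_pt (Q : S2pt) : S2pt :=
  match Q with
  | Pl x y z => Pl y x z
  | Ex1 a b => Ex2 a b
  | Ex2 a b => Ex1 a b
  end.

Lemma swap_ptK : involutive swap_pt.
Proof. by case. Qed.

Lemma map_swap_ptK (Z : seq S2pt) : List.map swap_pt (List.map swap_pt Z) = Z.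
Proof. by rewrite List.map_map (List.map_ext _ id swap_ptK) List.map_id. Qed.

Lemma comp_swap01K F : (F \mPo swap01) \mPo swap01 = F.
Proof.
apply: (@comp_mpoly_compK CC) => i; rewrite (tnth_nth 0).
case: i => [[|[|[|//]]] ?]; rewrite /= comp_mpolyX_tnth (tnth_nth 0) /=;
  by congr 'X_ _; apply: val_inj.
Qed.

Lemma meval_swap01 F x y z : (F \mPo swap01).@[coords x y z] = F.@[coords y x z].
Proof.
rewrite comp_mpoly_meval; apply: meval_eq => i; rewrite (tnth_nth 0).
by case: i => [[|[|[|//]]] ?]; rewrite /= mevalXU.
Qed.

Lemma wt_within_comp_swap01 lo hi F :
  wt_within mdeg lo hi F -> wt_within mdeg lo hi (F \mPo swap01).
Proof.
have hX i : wt_within mdeg 1 1 (tnth swap01 i).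
  by rewrite (tnth_nth 0); case: i => [[|[|[|//]]] ?]; apply: wt_within_X.
by move=> hF; have := wt_within_comp mdegD hX hF; rewrite !mul1n.
Qed.

Lemma mult_ge_P2_swap01 F x y z r :
  mult_ge_P2 F x y z r -> mult_ge_P2 (F \mPo swap01) y x z r.
Proof.
move=> /mult_ge_P2E hF; apply/mult_ge_P2E.
have -> : (F \mPo swap01) \mPo shift3 y x z = (F \mPo shift3 x y z) \mPo swap01.
  pose t : 3.-tuple poly3 := [tuple 'X_1 + x%:MP; 'X_0 + y%:MP; 'X_2 + z%:MP].
  rewrite !(@comp_mpoly_comp CC _ _ _ _ _ _ t) // => i; rewrite !(tnth_nth 0);
    case: i => [[|[|[|//]]] ?];
    by rewrite /= ?comp_mpolyD ?comp_mpolyC comp_mpolyX_tnth (tnth_nth 0).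
set G := F \mPo shift3 x y z.
have /wt_withinP hG : wt_within mdeg r (msize G) (G \mPo swap01).
  by apply/wt_within_comp_swap01/wt_withinP => m hm; rewrite hF // ltnW // msize_mdeg_lt.
by move=> m /hG /andP[].
Qed.

Lemma swap01_chart F a b :
  (F \mPo swap01) \mPo chart1 a b = F \mPo chart2 a b /\
  (F \mPo swap01) \mPo chart2 a b = F \mPo chart1 a b.
Proof.
by split; apply: (@comp_mpoly_comp CC) => i; rewrite !(tnth_nth 0);
  case: i => [[|[|[|//]]] ?]; rewrite /= comp_mpolyX_tnth (tnth_nth 0).
Qed.

Lemma mult_ge_swap d F Q r : mult_ge d F Q r -> mult_ge d (F \mPo swap01) (swap_pt Q) r.
Proof.
case: Q => [x y z|a b|a b] /=; first exact: mult_ge_P2_swap01.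
- by move/mult_ge_E1E => h; apply/mult_ge_E2E; rewrite (swap01_chart F a b).2.
- by move/mult_ge_E2E => h; apply/mult_ge_E1E; rewrite (swap01_chart F a b).1.
Qed.

Lemma section_dL2_swap d F : section_dL2 d F -> section_dL2 d (F \mPo swap01).
Proof.
move=> [nzF [/homog3_within hF [h1 h2]]]; split.
  by apply: contra_neq nzF => F0; rewrite -(comp_swap01K F) F0 comp_mpoly0.
split; first exact/homog3_within/wt_within_comp_swap01.
by split; [exact: mult_ge_P2_swap01 h2 | exact: mult_ge_P2_swap01 h1].
Qed.

Lemma has_div_swap Z m d : has_div Z m d -> has_div (List.map swap_pt Z) m d.
Proof.
move=> [F [sF hF]]; exists (F \mPo swap01); split; first exact: section_dL2_swap.
by move=> Q /List.in_map_iff[Q0 [<- /hF]]; apply: mult_ge_swap.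
Qed.

Lemma has_div_swapE Z m d : has_div (List.map swap_pt Z) m d <-> has_div Z m d.
Proof. by split=> [/has_div_swap|/has_div_swap //]; rewrite map_swap_ptK. Qed.

Lemma wt_within_X0 : wt_within exc_order 1 1 ('X_0 : poly2) /\ wt_within mdeg 1 1 ('X_0 : poly2).
Proof.
have := @wt_withinX CC 2 exc_order U_(0%R : 'I_2)%MM.
have := @wt_withinX CC 2 mdeg U_(0%R : 'I_2)%MM.
by rewrite mdeg1 /exc_order mnm1E.
Qed.

Lemma wt_within_X1 : wt_within exc_order 0 0 ('X_1 : poly2) /\ wt_within mdeg 1 1 ('X_1 : poly2).
Proof.
have := @wt_withinX CC 2 exc_order U_(1%R : 'I_2)%MM.
have := @wt_withinX CC 2 mdeg U_(1%R : 'I_2)%MM.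
by rewrite mdeg1 /exc_order mnm1E.
Qed.

Lemma wt_within_chart_X0X1 (c : CC) :
  wt_within exc_order 1 1 (c%:MP * ('X_0 * 'X_1) : poly2) /\
  wt_within mdeg 2 2 (c%:MP * ('X_0 * 'X_1) : poly2).
Proof.
have [u0 d0] := wt_within_X0; have [u1 d1] := wt_within_X1.
split; [apply: (wt_withinM exc_orderD (wt_withinC exc_orderD _) (wt_withinM exc_orderD u0 u1))
       | apply: (wt_withinM mdegD (wt_withinC mdegD _) (wt_withinM mdegD d0 d1))].
Qed.

Lemma wt_within_chart_X2 (c c' : CC) :
  wt_within exc_order 1 1 ('X_0 * (c%:MP + 'X_1 * c'%:MP) : poly2) /\
  wt_within mdeg 1 2 ('X_0 * (c%:MP + 'X_1 * c'%:MP) : poly2).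
Proof.
have [u0 d0] := wt_within_X0; have [u1 d1] := wt_within_X1.
split.
  apply: (wt_withinM exc_orderD u0); apply: wt_withinD (wt_withinC exc_orderD _) _.
  exact: (wt_withinM exc_orderD u1 (wt_withinC exc_orderD _)).
apply: (wt_withinM mdegD d0); apply: wt_withinD.
  exact: wt_withinW (wt_withinC mdegD _).
exact: wt_withinW (wt_withinM mdegD d1 (wt_withinC mdegD _)).
Qed.

Definition line_P1 (a b : CC) : poly3 := b%:MP * 'X_1 - a%:MP * 'X_2.

Lemma line_P1_neq0 a b : (a, b) <> (0, 0) -> line_P1 a b != 0.
Proof.
move=> ab; apply/eqP => h.
have := congr1 (meval (coords 0 1 0)) h; have := congr1 (meval (coords 0 0 1)) h.
rewrite /line_P1 !mevalB !mevalM !mevalC !mevalXU ?meval0 /coords /=.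
rewrite !mulr1 !mulr0 subr0 sub0r => /eqP; rewrite oppr_eq0 => /eqP a0 b0.
by apply: ab; rewrite a0 b0.
Qed.

Lemma section_line_P1 k a b :
  (a, b) <> (0, 0) -> section_dL2 k ((line_P1 a b ^+ 2 * 'X_2) ^+ k).
Proof.
move=> ab; rewrite exprMn -exprM; apply: section_dL2_mulX2; last by apply/andP; split; lia.
  by rewrite expf_neq0 // line_P1_neq0.
have hL : wt_within mdeg 1 1 (line_P1 a b).
  by apply: wt_withinB; apply: (wt_withinM mdegD (wt_withinC mdegD _) (wt_within_X _)).
apply/homog3_within; have := wt_withinXn mdegD (2 * k) hL.
by rewrite mul1n (_ : 3 * k - k = 2 * k)%N //; lia.
Qed.

Lemma line_P1_chart1 a b a' b' : b * a' = a * b' ->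
  line_P1 a b \mPo chart1 a' b' =
  (b * (transv a' b').1 - a * (transv a' b').2)%:MP * ('X_0 * 'X_1).
Proof.
move=> h; rewrite /line_P1 comp_mpolyB !rmorphM /= !comp_mpolyC !comp_mpolyX_tnth.
rewrite !(tnth_nth 0) /=.
case: (transv a' b') => c e /=.
transitivity ((b * a' - a * b')%:MP * 'X_0 + (b * c - a * e)%:MP * ('X_0 * 'X_1) : poly2).
  ring.
by rewrite h subrr mul0r add0r.
Qed.

(* With l the line through P1 in the direction of Q, the divisor is
   k (2 l~ + L12~ + 2 E1), and Q lies on l~ and E1 but not on L12~. *)
Lemma mult_ge_E1_line_P1 k a b a' b' : b * a' = a * b' ->
  mult_ge_E1 k ((line_P1 a b ^+ 2 * 'X_2) ^+ k) a' b' (4 * k).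
Proof.
move=> h.
have eG : (line_P1 a b ^+ 2 * 'X_2) ^+ k \mPo chart1 a' b' =
    (((b * (transv a' b').1 - a * (transv a' b').2)%:MP * ('X_0 * 'X_1)) ^+ 2 *
     ('X_0 * (b'%:MP + 'X_1 * (transv a' b').2%:MP))) ^+ k.
  by rewrite !rmorphXn rmorphM rmorphXn /= line_P1_chart1 // comp_mpolyX_tnth (tnth_nth 0).
have [u1 d1] := wt_within_chart_X0X1 (b * (transv a' b').1 - a * (transv a' b').2).
have [u2 d2] := wt_within_chart_X2 b' (transv a' b').2.
apply: (mult_ge_E1_within (hi1 := 3 * k) (hi2 := 6 * k)); rewrite eG.
  have := wt_withinXn exc_orderD k (wt_withinM exc_orderD (wt_withinXn exc_orderD 2 u1) u2).
  by apply: wt_withinW; lia.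
apply: wt_withinW (wt_withinXn mdegD k (wt_withinM mdegD (wt_withinXn mdegD 2 d1) d2)); lia.
Qed.

(* The divisor is 3 L12~ + 2 E1 + 2 E2, and Q lies on L12~ and E1. *)
Lemma mult_ge_E1_X2cube a : a != 0 -> mult_ge_E1 1 ('X_2 ^+ 3) a 0 5.
Proof.
move=> a0; have eX : 'X_2 \mPo chart1 a 0 = 1%:MP * ('X_0 * 'X_1).
  rewrite comp_mpolyX_tnth (tnth_nth 0) /= /transv (negbTE a0) /=.
  by rewrite mpolyC0 add0r mpolyC1 !mul1r mulr1.
have [u d] := wt_within_chart_X0X1 1.
apply: (mult_ge_E1_within (hi1 := 3) (hi2 := 6)); rewrite rmorphXn /= eX.
  exact: wt_withinW (wt_withinXn exc_orderD 3 u).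
exact: wt_withinW (wt_withinXn mdegD 3 d).
Qed.

Lemma mult_ge_le d F Q r r' : (r' <= r)%N -> mult_ge d F Q r -> mult_ge d F Q r'.
Proof.
move=> le_r; case: Q => [x y z|a b|a b] /=.
- by move/mult_ge_P2E => h; apply/mult_ge_P2E => m /h; apply: leq_trans.
- by move/mult_ge_E1E => h; apply/mult_ge_E1E => m /h[? ?]; split; lia.
- by move/mult_ge_E2E => h; apply/mult_ge_E2E => m /h[? ?]; split; lia.
Qed.

Lemma has_div_le Z m m' d : (m' <= m)%N -> has_div Z m d -> has_div Z m' d.
Proof.
by move=> le_m [F [sF hF]]; exists F; split=> // Q /hF; apply: mult_ge_le.
Qed.

(* A section of 0 L_2 is a nonzero constant, which vanishes nowhere. *)
Lemma section_dL2_0_mult F Q r : (0 < r)%N -> section_dL2 0 F -> ~ mult_ge 0 F Q r.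
Proof.
move=> r0 [nzF [hF _]].
have eF : F = (F@_0%MM)%:MP.
  apply/mpolyP => m; rewrite mcoeffC; have [->|m0] := eqVneq m 0%MM; first by rewrite mulr1.
  rewrite mulr0 memN_msupp_eq0 //; apply: contra m0 => /hF /eqP.
  by rewrite muln0 mdeg_eq0.
have c0 : F@_0%MM != 0 by apply: contra_neq nzF => c0; rewrite eF c0.
have supp0 k (t : 3.-tuple {mpoly CC[k]}) : 0%MM \in msupp (F \mPo t).
  by rewrite eF comp_mpolyC msuppC (negbTE c0) inE.
case: Q => [x y z|a b|a b] /=.
- by move/mult_ge_P2E/(_ _ (supp0 _ _)); rewrite mdeg0; case: r r0.
- by move/mult_ge_E1E/(_ _ (supp0 _ _)) => -[_]; rewrite mdeg0 addn0; case: r r0.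
- by move/mult_ge_E2E/(_ _ (supp0 _ _)) => -[_]; rewrite mdeg0 addn0; case: r r0.
Qed.

Lemma has_div0 Z m : Z <> [::] -> (0 < m)%N -> ~ has_div Z m 0.
Proof.
case: Z => [//|Q Z] _ m0 [F [sF hF]].
exact: section_dL2_0_mult m0 sF (hF Q (or_introl erefl)).
Qed.

Lemma has_divbP Z m d : reflect (has_div Z m d) (has_divb Z m d).
Proof. by rewrite /has_divb; case: excluded_middle_informative => h; constructor. Qed.

Lemma alpha_min Z m d : has_div Z m d -> has_div Z m (alpha Z m) /\ (alpha Z m <= d)%N.
Proof.
move=> hd; rewrite /alpha; case: excluded_middle_informative => [ex|nex]; last first.
  by case: nex; exists d; apply/has_divbP.
by case: ex_minnP => a /has_divbP ha min_a; split=> //; apply/min_a/has_divbP.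
Qed.

(* [alpha] takes the junk value 0 when no divisor exists. *)
Lemma alpha_gt0_has_div Z m : (0 < alpha Z m)%N -> has_div Z m (alpha Z m).
Proof.
rewrite /alpha; case: excluded_middle_informative => [ex|//] _.
by case: ex_minnP => a /has_divbP.
Qed.

Lemma alpha_profileE Z : Z <> [::] ->
  (alpha Z 1 = 1 /\ alpha Z 2 = 1 /\ alpha Z 3 = 1 /\ alpha Z 4 = 1 /\ 1 < alpha Z 5)%N <->
  [/\ has_div Z 4 1, ~ has_div Z 5 1 & exists d, has_div Z 5 d].
Proof.
move=> nZ; have no0 m : (0 < m)%N -> ~ has_div Z m 0 by apply: has_div0.
have alpha1 m : (0 < m <= 4)%N -> has_div Z 4 1 -> alpha Z m = 1%N.
  move=> /andP[m0 m4] /(has_div_le m4) /alpha_min[ha].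
  by case: (alpha Z m) ha => [/(no0 _ m0)|[|]].
split=> [[_ [_ [_ [a4 a5]]]]|[h4 h5 [d h5d]]].
  have h4 : has_div Z 4 1 by rewrite -{2}a4; apply: alpha_gt0_has_div; rewrite a4.
  split=> //; last by exists (alpha Z 5); apply: alpha_gt0_has_div; lia.
  by move=> /alpha_min[_]; lia.
do 4 (split; first by apply: alpha1).
have [ha _] := alpha_min h5d.
by case: (alpha Z 5) ha => [|[|//]] ha; [case: (no0 5 isT ha) | case: (h5 ha)].
Qed.

Lemma valid_pt_swap Q : valid_pt Q -> valid_pt (swap_pt Q).
Proof. by case: Q => [x y z [h1 h2]|a b|a b]. Qed.

Lemma same_pt_swap Q Q' : same_pt Q Q' -> same_pt (swap_pt Q) (swap_pt Q').
Proof.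
case: Q Q' => [x y z|a b|a b] [x' y' z'|a' b'|a' b'] //=.
by move=> [c [c0 [ex [ey ez]]]]; exists c.
Qed.

Definition single_exc_point (Z : seq S2pt) : Prop :=
  exists Q, valid_pt Q /\ on_exc Q /\ ~ on_L12t Q /\ (forall Q', List.In Q' Z -> same_pt Q Q').

Lemma single_exc_point_swap Z : single_exc_point Z -> single_exc_point (List.map swap_pt Z).
Proof.
move=> [Q [vQ [eQ [lQ hQ]]]]; exists (swap_pt Q); split; first exact: valid_pt_swap.
split; first by case: Q vQ eQ lQ {hQ}.
split; first by case: Q vQ eQ lQ {hQ}.
by move=> Q' /List.in_map_iff[Q0 [<- /hQ /same_pt_swap]].
Qed.

Lemma cubic_mult_ge_E2 F a b : homog3 3 F -> (a, b) <> (0, 0) -> mult_ge_E2 1 F a b 4 ->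
  exists p q, forall x y z, F.@[coords x y z] = (b * x - a * z) ^+ 2 * (p * x + q * z).
Proof.
move=> /homog3_within hF ab /(@mult_ge_swap _ _ (Ex2 a b)) hm.
have hF' : homog3 3 (F \mPo swap01) by apply/homog3_within/wt_within_comp_swap01.
have [p [q [eF _ _]]] := cubic_mult_ge_E1 hF' ab hm (leqnn 4).
by exists p, q => x y z; rewrite -meval_swap01 eF.
Qed.

Lemma mult_ge_X2cube Q :
  valid_pt Q -> on_exc Q -> on_L12t Q -> mult_ge 1 ('X_2 ^+ 3) Q 5.
Proof.
have a0 (a b : CC) : (a, b) <> (0, 0) -> b = 0 -> a != 0.
  by move=> ab b0; apply/eqP => a0; apply: ab; rewrite a0 b0.
case: Q => [x y z|a b|a b] //= ab _ b0; have {}a0 := a0 _ _ ab b0; rewrite b0.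
  exact: mult_ge_E1_X2cube.
have := @mult_ge_swap _ _ (Ex1 a 0) _ (mult_ge_E1_X2cube a0) => /=.
by rewrite rmorphXn /= comp_mpolyX_tnth (tnth_nth 0).
Qed.

Lemma two_neq0 : (2%:R : CC) != 0.
Proof. by have : (2%:R : Rdefinitions.R[i]) != 0 by rewrite pnatr_eq0. Qed.

(* Compare second differences at t = 0, 1, 2. *)
Lemma sqr_affine (q a b A B : CC) :
  (forall t, q * (b * t - a) ^+ 2 = A * t + B) -> q * b ^+ 2 = 0.
Proof.
move=> h; have : 2 * (q * b ^+ 2) = 0.
  transitivity (q * (b * 0 - a) ^+ 2 - 2 * (q * (b * 1 - a) ^+ 2) + q * (b * 2 - a) ^+ 2).
    ring.
  by rewrite !h; ring.
by move/eqP; rewrite mulf_eq0 (negbTE two_neq0) => /eqP.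
Qed.

Lemma pair_neq0 (a b : CC) : b != 0 -> (a, b) <> (0, 0).
Proof. by move=> /negP b0 [_ /eqP]. Qed.

Lemma same_pt_Ex1 a b a' b' : b != 0 -> b' != 0 -> b * a' = a * b' ->
  same_pt (Ex1 a b) (Ex1 a' b').
Proof.
move=> b0 b'0 e; exists (b' / b); split; first by rewrite mulf_neq0 ?invr_eq0.
by split; [apply: (mulfI b0); rewrite e | ]; field.
Qed.

(* Vanishing at P2 = [0:1:0] kills p in [cubic_mult_ge_E1], and then
   a p + b q = 0 would kill q as well. *)
Lemma cubic_E1_off_L12 F a b r :
  section_dL2 1 F -> b != 0 -> mult_ge_E1 1 F a b r -> (4 <= r)%N ->
  r = 4%N /\ exists2 q, q != 0 & forall x y z, F.@[coords x y z] = q * (b * y - a * z) ^+ 2 * z.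
Proof.
move=> [nzF [hF [_ hP2]]] b0 hm r4.
have [p [q [eF F0 pq]]] := cubic_mult_ge_E1 hF (pair_neq0 b0) hm r4.
have p0 : p = 0.
  move: (mult_ge_P2_eval hP2); rewrite eF !mulr1 !mulr0 subr0 addr0 => /eqP.
  by rewrite mulf_eq0 expf_eq0 (negbTE b0) andbF => /eqP.
have q0 : q != 0 by apply: contra_neq nzF => q0; apply: F0; rewrite p0 q0.
split; last by exists q => // x y z; rewrite eF p0; ring.
apply/eqP; rewrite eqn_leq r4 andbT leqNgt; apply/negP => /pq /eqP.
by rewrite p0 mulr0 add0r mulf_eq0 (negbTE b0) (negbTE q0).
Qed.

Lemma E1_point_has_div a b Z : b != 0 -> Z <> [::] ->
  (forall Q, List.In Q Z -> same_pt (Ex1 a b) Q) ->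
  [/\ has_div Z 4 1, ~ has_div Z 5 1 & has_div Z 5 2].
Proof.
move=> b0 nZ hZ.
have on_line k : has_div Z (4 * k) k.
  exists ((line_P1 a b ^+ 2 * 'X_2) ^+ k); split; first exact/section_line_P1/pair_neq0.
  move=> Q /hZ; case: Q => [x y z|a' b'|a' b'] //= [c [_ [-> ->]]].
  by apply: mult_ge_E1_line_P1; ring.
split; [exact: (on_line 1) | | exact: has_div_le (on_line 2)].
case: Z nZ hZ {on_line} => [//|Q Z _ /(_ Q (or_introl erefl)) hQ].
move=> [F [sF /(_ Q (or_introl erefl))]]; clear Z.
case: Q hQ => [x y z|a' b'|a' b'] //= [c [c0 [-> ->]]] h5.
by have [] := cubic_E1_off_L12 sF (mulf_neq0 c0 b0) h5 isT.
Qed.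

Lemma E1_point_single a b Z : b != 0 -> List.In (Ex1 a b) Z ->
  (forall Q, List.In Q Z -> valid_pt Q) -> has_div Z 4 1 -> single_exc_point Z.
Proof.
move=> b0 inQ vZ [F [sF hFZ]]; have [nzF [hF _]] := sF.
have [_ [q q0 eF]] := cubic_E1_off_L12 sF b0 (hFZ _ inQ) (leqnn 4).
have not_affine A B : ~ (forall t, F.@[coords 0 t 1] = A * t + B).
  move=> hA; suff: q * b ^+ 2 = 0 by apply/eqP; rewrite mulf_neq0 ?expf_neq0.
  by apply: (@sqr_affine q a b A B) => t; rewrite -hA eF; ring.
exists (Ex1 a b); split; first exact: vZ.
split=> //; split; first exact/eqP.
move=> Q inQ'; move: (vZ _ inQ') (hFZ _ inQ').
case: Q {inQ'} => [x y z|a' b'|a' b'] /= vQ hQ.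
- by move: nzF; rewrite (mult_ge_P2_homog hF hQ) eqxx.
- have [p' [q' [eF' _ _]]] := cubic_mult_ge_E1 hF vQ hQ (leqnn 4).
  have [b'0|b'0] := eqVneq b' 0.
    by case: (not_affine (a' ^+ 2 * p') (a' ^+ 2 * q')) => t; rewrite eF' b'0; ring.
  apply: same_pt_Ex1 => //; apply/eqP; rewrite -subr_eq0.
  have /eqP : q * (b * a' - a * b') ^+ 2 * b' = 0 by rewrite -(eF 0 a' b') eF'; ring.
  by rewrite !mulf_eq0 (negbTE q0) (negbTE b'0) orbF /= orbb.
- have [p' [q' eF']] := cubic_mult_ge_E2 hF vQ hQ.
  by case: (not_affine 0 (a' ^+ 2 * q')) => t; rewrite eF'; ring.
Qed.

Lemma exists_off_L12 Z : (forall Q, List.In Q Z -> valid_pt Q) ->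
  has_div Z 4 1 -> ~ has_div Z 5 1 ->
  exists a b, b != 0 /\ (List.In (Ex1 a b) Z \/ List.In (Ex2 a b) Z).
Proof.
move=> vZ [F [[nzF [hF _]] hFZ]] no5; apply: NNPP => noff; apply: no5.
exists ('X_2 ^+ 3); split.
  rewrite -[X in section_dL2 _ X]mul1r; apply: section_dL2_mulX2 => //; first exact: oner_neq0.
  by move=> m; rewrite msupp1 inE => /eqP ->; rewrite mdeg0.
move=> Q inQ; have vQ := vZ _ inQ.
case: Q inQ vQ => [x y z|a b|a b] inQ vQ.
- by move: nzF; rewrite (mult_ge_P2_homog hF (hFZ _ inQ)) eqxx.
- apply: mult_ge_X2cube => //=; apply: NNPP => /eqP b0.
  by apply: noff; exists a, b; split=> //; left.
- apply: mult_ge_X2cube => //=; apply: NNPP => /eqP b0.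
  by apply: noff; exists a, b; split=> //; right.
Qed.

Lemma has_div_single Z : (forall Q, List.In Q Z -> valid_pt Q) ->
  has_div Z 4 1 -> ~ has_div Z 5 1 -> single_exc_point Z.
Proof.
move=> vZ h4 h5; have [a [b [b0 [inZ|inZ]]]] := exists_off_L12 vZ h4 h5.
  exact: E1_point_single inZ vZ h4.
rewrite -(map_swap_ptK Z); apply/single_exc_point_swap/(E1_point_single b0).
- by apply/List.in_map_iff; exists (Ex2 a b).
- by move=> Q /List.in_map_iff[Q0 [<- /vZ /valid_pt_swap]].
- exact/has_div_swapE.
Qed.

Lemma single_has_div Z : Z <> [::] -> single_exc_point Z ->
  [/\ has_div Z 4 1, ~ has_div Z 5 1 & exists d, has_div Z 5 d].
Proof.
move=> nZ [Q [vQ [eQ [lQ hQ]]]].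
case: Q vQ eQ lQ hQ => [x y z|a b|a b] //= _ _ /eqP b0 hQ.
  by have [? ? ?] := E1_point_has_div b0 nZ hQ; split=> //; exists 2%N.
have nZ' : List.map swap_pt Z <> [::] by case: Z nZ {hQ}.
have hQ' Q' : List.In Q' (List.map swap_pt Z) -> same_pt (Ex1 a b) Q'.
  by move=> /List.in_map_iff[Q0 [<- /hQ hQ0]]; exact: (@same_pt_swap (Ex2 a b) Q0 hQ0).
have [h4 h5 h52] := E1_point_has_div b0 nZ' hQ'.
by rewrite !has_div_swapE in h4 h5 h52; split=> //; exists 2%N.
Qed.

Theorem theorem4 (Z : seq S2pt) :
  Z <> [::] ->
  (forall Q, List.In Q Z -> valid_pt Q) ->
  ((exists Q, valid_pt Q /\ on_exc Q /\ ~ on_L12t Q /\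
              (forall Q', List.In Q' Z -> same_pt Q Q'))
   <->
   (alpha Z 1 = 1 /\ alpha Z 2 = 1 /\ alpha Z 3 = 1 /\ alpha Z 4 = 1 /\
    1 < alpha Z 5)%N).
Proof.
move=> nZ vZ; rewrite alpha_profileE //; split; first exact: single_has_div.
by case=> h4 h5 _; apply: has_div_single.
Qed.
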